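(* Let $G$ be a compact Hausdorff group and suppose an element $g\in G$ has a countable Engel sink $\{s_1,s_2,\dots\}$. Then there are positive integers $i,j$ and a nonempty open set $U\subseteq G$ such that $[u,{}_i g]=s_j$ for all $u\in U$. If in addition $G$ is profinite, then there are positive integers $i,j$ and a coset $Nb$ of an open normal subgroup $N$ of $G$ such that $[nb,{}_i g]=s_j$ for all $n\in N$.
   Context: Commutators are left-normed, $[a,b]=a^{-1}b^{-1}ab$, and $[x,{}_n g]=[x,g,\dots,g]$ with $g$ repeated $n$ times. An Engel sink of an element $g$ of a group $G$ is a set $\mathscr E(g)\subseteq G$ such that for every $x\in G$ there is a positive integer $n(x,g)$ with $[x,{}_n g]\in\mathscr E(g)$ for all $n\ge n(x,g)$. ''Countable'' means finite or denumerable. *)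

From HB Require Import structures.
From mathcomp Require Import all_boot all_order.
From mathcomp Require Import all_classical topology.
Set Implicit Arguments. Unset Strict Implicit. Unset Printing Implicit Defensive.
Local Open Scope classical_set_scope.

Definition is_topological_group (T : topologicalType)
  (mul : T -> T -> T) (inv : T -> T) (one : T) : Prop :=
  (forall x y z, mul x (mul y z) = mul (mul x y) z) /\
  (forall x, mul one x = x) /\ (forall x, mul x one = x) /\
  (forall x, mul (inv x) x = one) /\ (forall x, mul x (inv x) = one) /\
  continuous (fun p : T * T => mul p.1 p.2) /\ continuous inv.

Definition comm (T : Type) (mul : T -> T -> T) (inv : T -> T) (a b : T) : T :=
  mul (mul (mul (inv a) (inv b)) a) b.

Definition engel_comm (T : Type) (mul : T -> T -> T) (inv : T -> T)
  (x : T) (n : nat) (g : T) : T :=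
  iter n (fun y => comm mul inv y g) x.

Definition engel_sink (T : Type) (mul : T -> T -> T) (inv : T -> T)
  (g : T) (E : set T) : Prop :=
  forall x : T, exists2 n0 : nat, (0 < n0)%N &
    forall n : nat, (n0 <= n)%N -> E (engel_comm mul inv x n g).

Definition normal_subgroup (T : Type) (mul : T -> T -> T) (inv : T -> T) (one : T)
  (N : set T) : Prop :=
  [/\ N one, (forall x y, N x -> N y -> N (mul x y)), (forall x, N x -> N (inv x))
    & (forall x n, N n -> N (mul (mul (inv x) n) x))].

Definition profinite (T : topologicalType) : Prop :=
  [/\ compact [set: T], hausdorff_space T & totally_disconnected [set: T]].

(* The sets {x | [x,_i g] = s}, for i > 0 and s in the sink, are closed,
   because x |-> [x,_i g] is continuous and points are closed, and by the
   definition of an Engel sink they cover G.  There are countably many of them,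
   so by the Baire category theorem for compact Hausdorff spaces one of them
   has nonempty interior U.  A profinite group is zero-dimensional (in a
   compact Hausdorff space quasi-components are connected), so for u in U the
   open set U u^-1 contains a clopen neighbourhood C of 1.  The normal core N of
   the stabiliser {x | x C = C} is open, by the tube lemma over the compact
   space G x G, and N u is contained in U. *)

From mathcomp Require Import all_boot all_order.
From mathcomp Require Import all_classical topology.
Local Open Scope classical_set_scope.

Lemma tube_lemma {X Y : topologicalType} (K : set X) (O : set (X * Y)) (y : Y) :
  compact K -> open O -> (forall x, K x -> O (x, y)) ->
  \forall y' \near y, forall x, K x -> O (x, y').
Proof.
move=> /compact_near_coveringP cK oO KO; apply: cK => x Kx.
by apply: filterS (open_nbhs_nbhs (conj oO (KO x Kx))) => -[].
Qed.

Lemma open_iff_clopen_preimage {X Y : topologicalType} (f h : X -> Y) (C : set Y) :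
  continuous f -> continuous h -> clopen C -> open [set x | C (f x) <-> C (h x)].
Proof.
move=> cf ch [oC /closed_openC oCc].
have -> : [set x | C (f x) <-> C (h x)] =
    (f @^-1` C `&` h @^-1` C) `|` (f @^-1` (~` C) `&` h @^-1` (~` C)).
  apply/seteqP; split => x /=; last by case=> -[].
  case: (pselect (C (f x))) => Cf [fh hf]; first by left; split => //; exact: fh.
  by right; split => // /hf.
by apply: openU; apply: openI; apply: (continuousP _).1.
Qed.

Section compact_hausdorff.
Context {T : topologicalType}.
Hypotheses (cT : compact [set: T]) (hT : hausdorff_space T).

Lemma closure_subset_open (O : set T) (x : T) : open O -> O x ->
  exists W : set T, [/\ open W, W x & closure W `<=` O].
Proof.
move=> oO Ox; have [|W nW cWO] := @compact_regular T x setT hT cT filterT O.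
  exact: open_nbhs_nbhs.
exists W°; split; first exact: open_interior.
  exact: nbhs_singleton (nbhs_interior nW).
exact: subset_trans (closureS (@interior_subset _ _)) cWO.
Qed.

Lemma nested_closed_bigcap_neq0 (K : nat -> set T) :
  (forall n, closed (K n)) -> (forall n, K n !=set0) ->
  (forall m n, (m <= n)%N -> K n `<=` K m) -> \bigcap_n K n !=set0.
Proof.
move=> clK K0 Kdec; pose F := filter_from [set: nat] K.
have FF : ProperFilter F.
  apply: filter_from_proper => [|n _]; last exact: K0.
  apply: filter_from_filter => [|i j _ _]; first by exists 0%N.
  exists (maxn i j) => //; rewrite subsetI.
  by split; apply: Kdec; [exact: leq_maxl | exact: leq_maxr].
have [p [_ clp]] := cT _ FF filterT.
exists p => n _; rewrite ((closure_id _).1 (clK n)).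
by move=> B; apply: clp; exists n.
Qed.

Lemma baire_compact (F : nat -> set T) : [set: T] !=set0 ->
  (forall n, closed (F n)) -> (forall x, exists n, F n x) ->
  exists n U, [/\ open U, U !=set0 & U `<=` F n].
Proof.
move=> T0 clF cover; apply: contrapT => noint.
have shrink (nV : nat * set T) : exists V' : set T, open nV.2 -> nV.2 !=set0 ->
    [/\ open V', V' !=set0 & closure V' `<=` nV.2 `\` F nV.1].
  case: nV => n V /=; have [[oV V0]|nV] := pselect (open V /\ V !=set0); last first.
    by exists set0 => oV V0; exfalso; exact: nV.
  have /set0P[x VFx] : V `\` F n != set0.
    by apply/eqP; rewrite setD_eq0 => VF; apply: noint; exists n, V.
  have oVF : open (V `\` F n) by apply: openI => //; exact: closed_openC.
  have [W [oW Wx clW]] := closure_subset_open _ _ oVF VFx.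
  by exists W => _ _; split => //; exists x.
have [h hP] := choice shrink.
pose V := fix V n := if n is m.+1 then h (m, V m) else [set: T].
have VP n : open (V n) /\ V n !=set0.
  elim: n => [|n [oV V0]]; first by split; [exact: openT|].
  by have [] := hP (n, V n) oV V0.
have VS n : closure (V n.+1) `<=` V n `\` F n.
  by have [oV V0] := VP n; have [] := hP (n, V n) oV V0.
have [p clVp] : \bigcap_n closure (V n) !=set0.
  apply: nested_closed_bigcap_neq0 => [n|n|m n].
  - exact: closed_closure.
  - by have [_ [y Vy]] := VP n; exists y; exact: subset_closure.
  - elim: n => [|n IH]; first by rewrite leqn0 => /eqP ->.
    rewrite leq_eqVlt => /orP[/eqP -> //|/IH]; apply: subset_trans.
    by move=> y /VS[Vy _]; exact: subset_closure.
have [n Fnp] := cover p.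
by have [_] := VS n _ (clVp n.+1 I).
Qed.

Lemma baire_compact_countable (I : Type) (D : set I) (F : I -> set T) :
  [set: T] !=set0 -> countable D -> (forall i, D i -> closed (F i)) ->
  (forall x, exists2 i, D i & F i x) ->
  exists2 i, D i & exists U, [/\ open U, U !=set0 & U `<=` F i].
Proof.
move=> T0 /countable_injP[f finj] clF cover.
pose G n := [set x | exists2 i, D i /\ f i = n & F i x].
(* f is injective on D, so each G n is either empty or one of the F i. *)
have clG n : closed (G n).
  have [[i [Di <-]]|none] := pselect (exists i, D i /\ f i = n); last first.
    suff -> : G n = set0 by exact: closed0.
    by apply/seteqP; split => // x [i Din _]; apply: none; exists i.
  suff -> : G (f i) = F i by exact: clF.
  apply/seteqP; split => [x [j [Dj fji] Fjx]|x Fix]; last by exists i.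
  by rewrite -(finj j i) ?in_setE.
have [n [U [oU [u Uu] UG]]] : exists n U, [/\ open U, U !=set0 & U `<=` G n].
  apply: baire_compact => // x; have [i Di Fix] := cover x.
  by exists (f i), i.
have [i [Di fin] _] := UG u Uu.
exists i => //; exists U; split => [//||v Uv]; first by exists u.
have [j [Dj fjn] Fjv] := UG v Uv.
by rewrite -(finj j i) ?in_setE // fjn fin.
Qed.

Lemma compact_separate_closed (A B : set T) :
  closed A -> closed B -> A `&` B = set0 ->
  exists U V : set T, [/\ open U, open V, A `<=` U, B `<=` V & U `&` V = set0].
Proof.
move=> cA cB AB0.
have sA : set_nbhs A (~` B).
  apply/set_nbhsP; exists (~` B); split => //; first exact: closed_openC.
  by apply/disjoints_subset.
have [W /set_nbhsP [U [oU AU UW]] cW] := compact_normal hT cT cA sA.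
exists U, (~` closure W); split => //.
- exact/closed_openC/closed_closure.
- by move=> z Bz clWz; exact: cW clWz Bz.
- by apply/disjoints_subset => z Uz; apply; apply: subset_closure; exact: UW.
Qed.

Definition quasi_component (x : T) :=
  [set z | forall C : set T, clopen C -> C x -> C z].

Lemma closed_quasi_component x : closed (quasi_component x).
Proof.
have -> : quasi_component x = \bigcap_(C in [set C | clopen C /\ C x]) C.
  by apply/seteqP; split => z Qz C; [case=> /Qz|move=> ? ?; exact: Qz].
by apply: closed_bigI => C [[]].
Qed.

Lemma clopen_subset_open_quasi_component x (O : set T) :
  open O -> quasi_component x `<=` O -> exists C, [/\ clopen C, C x & C `<=` O].
Proof.
move=> oO QO; pose F := filter_from [set D : set T | D x /\ clopen D] id.
suff [C [Cx clC] CO] : F O by exists C.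
have PF : ProperFilter F.
  apply: filter_from_proper => [|? [? _]]; last by exists x.
  apply: filter_from_filter; first by exists setT; split => //; exact: clopenT.
  by move=> A B [? ?] [? ?]; exists (A `&` B) => //; split=> //; exact: clopenI.
have /compact_near_coveringP : compact (~` O).
  by apply: (subclosed_compact _ cT) => //; exact: open_closedC.
move=> /(_ _ _ setC (powerset_filter_from_filter PF))[].
  move=> y nOy; have [C [[oC cC] Cx Cy]] : exists C, [/\ clopen C, C x & ~ C y].
    apply: contrapT => nC; apply/nOy/QO => C clC Cx.
    by apply: contrapT => nCy; apply: nC; exists C.
  exists (~` C, [set U | U `<=` C]); first split.
  - by apply: open_nbhs_nbhs; split => //; exact: closed_openC.
  - apply/near_powerset_filter_fromP; first by move=> ? ?; exact: subset_trans.
    by exists C => //; exists C.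
  - by case=> i j [? /subsetC]; apply.
by move=> D [DF _ [C DC]]/(_ _ DC)/subsetC2/filterS; apply; exact: DF.
Qed.

Lemma clopenI_open_cover (C U V : set T) : clopen C -> open U -> open V ->
  C `<=` U `|` V -> U `&` V = set0 -> clopen (C `&` U).
Proof.
move=> [oC cC] oU oV CUV /disjoints_subset UV0; split; first exact: openI.
have -> : C `&` U = C `&` ~` V.
  apply/seteqP; split => z [Cz Hz]; split => //; first exact: UV0.
  by case: (CUV z Cz).
by apply: closedI => //; exact: open_closedC.
Qed.

(* B and the rest of Q are separated by disjoint open sets U and V; a clopen
   neighbourhood of x inside U `|` V then traps Q in U or in V. *)
Lemma quasi_component_connected x : connected (quasi_component x).
Proof.
set Q := quasi_component x; move=> B [b Bb] [C1 oC1 BQ1] [C2 cC2 BQ2].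
have QD D : clopen D -> D x -> Q `<=` D by move=> clD Dx z; exact.
have cB : closed B.
  by rewrite BQ2; apply: closedI => //; exact: closed_quasi_component.
have cR : closed (Q `\` C1).
  by apply: closedI; [exact: closed_quasi_component | exact: open_closedC].
have BR0 : B `&` (Q `\` C1) = set0.
  by apply/disjoints_subset => z; rewrite BQ1 => -[_ ?] [_]; apply.
have [U [V [oU oV BU RV UV0]]] := compact_separate_closed _ _ cB cR BR0.
have QUV : Q `<=` U `|` V.
  move=> z Qz; case: (pselect (C1 z)) => C1z; last by right; apply: RV.
  by left; apply: BU; rewrite BQ1.
have [C [clC Cx CUV]] := clopen_subset_open_quasi_component _ _ (openU oU oV) QUV.
have clCU := clopenI_open_cover _ _ _ clC oU oV CUV UV0.
have clCV : clopen (C `&` V).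
  by apply: (clopenI_open_cover _ _ _ clC oV oU); rewrite 1?setUC // setIC.
move/disjoints_subset: UV0 => UV0.
have [Ux|nUx] := pselect (U x).
  have QU : Q `<=` U by move=> z /(QD _ clCU (conj Cx Ux)) [].
  apply/seteqP; split => [z|z Qz]; first by rewrite BQ1 => -[].
  rewrite BQ1; split => //; apply: contrapT => nC1z.
  exact: UV0 (QU z Qz) (RV z (conj Qz nC1z)).
have Vx : V x by case: (CUV x Cx).
have Qb : Q b by rewrite BQ1 in Bb; case: Bb.
have [_ Vb] := QD _ clCV (conj Cx Vx) b Qb.
by have := UV0 b (BU b Bb) Vb.
Qed.

Lemma totally_disconnected_zero_dimensional :
  totally_disconnected [set: T] -> zero_dimensional T.
Proof.
move=> tdT x y /eqP xy; apply: contrapT => nC; apply: xy.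
have Qy : quasi_component x y.
  by move=> C clC Cx; apply: contrapT => nCy; apply: nC; exists C.
suff : connected_component [set: T] x y by rewrite (tdT x I).
exists (quasi_component x) => //; split => //; exact: quasi_component_connected.
Qed.

Lemma zero_dimensional_clopen_nbhs (x : T) (W : set T) :
  zero_dimensional T -> nbhs x W -> exists C, [/\ clopen C, C x & C `<=` W].
Proof.
by move=> zdT /(zero_dimensional_cvg hT zdT cT) [C [Cx clC] CW]; exists C.
Qed.

End compact_hausdorff.

Lemma continuous_family_constant_on_open {X Y : topologicalType}
    (c : nat -> X -> Y) (E : set Y) :
  compact [set: X] -> hausdorff_space X -> accessible_space Y ->
  [set: X] !=set0 -> countable E -> (forall i, continuous (c i)) ->
  (forall x, exists i, E (c i x)) ->
  exists i, exists2 s, E s & exists U,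
    [/\ open U, U !=set0 & forall u, U u -> c i u = s].
Proof.
move=> cX hX aY X0 cE cc cover.
pose F (p : nat * Y) := c p.1 @^-1` [set p.2].
have clF p : ([set: nat] `*` E) p -> closed (F p).
  move=> _; apply: (continuous_closedP (c p.1)).1 => //.
  exact: accessible_closed_set1.
have coverF x : exists2 p, ([set: nat] `*` E) p & F p x.
  by have [i Ei] := cover x; exists (i, c i x).
have [[i s] [_ Es] [U [oU U0 Uis]]] :=
  baire_compact_countable cX hX _ _ _ X0 (countableX (countableP _) cE) clF coverF.
by exists i, s => //; exists U.
Qed.

Lemma continuous_fst {X Y : topologicalType} : continuous (@fst X Y).
Proof. by move=> [? ?]; exact: cvg_fst. Qed.

Lemma continuous_snd {X Y : topologicalType} : continuous (@snd X Y).
Proof. by move=> [? ?]; exact: cvg_snd. Qed.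

Section continuity.
Context {T : topologicalType} (mul : T -> T -> T) (inv : T -> T).
Hypotheses (mul_cont : continuous (fun p : T * T => mul p.1 p.2))
  (inv_cont : continuous inv).

Lemma continuous_mul {X : topologicalType} (f h : X -> T) :
  continuous f -> continuous h -> continuous (fun x => mul (f x) (h x)).
Proof. by move=> cf ch x; exact: continuous2_cvg (mul_cont _) (cf x) (ch x). Qed.

Lemma continuous_comm {X : topologicalType} (f : X -> T) (g : T) :
  continuous f -> continuous (fun x => comm mul inv (f x) g).
Proof.
move=> cf; have cg : continuous (fun _ : X => g) by exact: cst_continuous.
apply: continuous_mul => //; apply: continuous_mul => //.
apply: continuous_mul => //; last exact: cst_continuous.
by move=> x; apply: continuous_comp; [exact: cf | exact: inv_cont].
Qed.

Lemma continuous_engel_comm (g : T) n :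
  continuous (fun x => engel_comm mul inv x n g).
Proof.
by elim: n => [|n IH]; [move=> x; exact: cvg_id | exact: continuous_comm].
Qed.

End continuity.

Section topological_group.
Context {T : topologicalType} (mul : T -> T -> T) (inv : T -> T) (one : T).
Hypothesis TG : is_topological_group mul inv one.

Let mulA x y z : mul x (mul y z) = mul (mul x y) z. Proof. by case: TG. Qed.
Let mul1g x : mul one x = x. Proof. by case: TG => _ []. Qed.
Let mulg1 x : mul x one = x. Proof. by case: TG => _ [_ []]. Qed.
Let mulKg x y : mul (inv x) (mul x y) = y.
Proof. by case: TG => _ [_ [_ [mulVg _]]]; rewrite mulA mulVg mul1g. Qed.
Let mulKVg x y : mul x (mul (inv x) y) = y.
Proof. by case: TG => _ [_ [_ [_ [mulgV _]]]]; rewrite mulA mulgV mul1g. Qed.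
Let mul_cont : continuous (fun p : T * T => mul p.1 p.2).
Proof. by case: TG => _ [_ [_ [_ [_ []]]]]. Qed.
Let inv_cont : continuous inv.
Proof. by case: TG => _ [_ [_ [_ [_ []]]]]. Qed.

(* The normal core of the left stabiliser of C, written without conjugation. *)
Definition core_stabilizer (C : set T) :=
  [set x | forall y z, C (mul y (mul x z)) <-> C (mul y z)].

Lemma core_stabilizer_normal C :
  normal_subgroup mul inv one (core_stabilizer C).
Proof.
split=> [y z|x1 x2 N1 N2 y z|x Nx y z|x n Nn y z]; first by rewrite mul1g.
- by rewrite -mulA; exact: iff_trans (N1 y (mul x2 z)) (N2 y z).
- by have := Nx y (mul (inv x) z); rewrite mulKVg => h; exact: iff_sym h.
- by have := Nn (mul y (inv x)) (mul x z); rewrite -!mulA mulKg.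
Qed.

Lemma core_stabilizer_sub C : C one -> core_stabilizer C `<=` C.
Proof. by move=> C1 x /(_ one one); rewrite !mul1g !mulg1 => ->. Qed.

Lemma open_core_stabilizer C :
  compact [set: T] -> clopen C -> open (core_stabilizer C).
Proof.
move=> cT clC; rewrite openE => x0 Nx0.
pose O := [set p : (T * T) * T |
  C (mul p.1.1 (mul p.2 p.1.2)) <-> C (mul p.1.1 p.1.2)].
have c11 : continuous (fun p : (T * T) * T => p.1.1).
  by move=> p; apply: continuous_comp; exact: continuous_fst.
have c12 : continuous (fun p : (T * T) * T => p.1.2).
  by move=> p; apply: continuous_comp; [exact: continuous_fst | exact: continuous_snd].
have oO : open O.
  apply: open_iff_clopen_preimage => //; apply: continuous_mul => //.
  exact: continuous_mul continuous_snd c12.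
have cTT : compact [set: T * T] by rewrite -setXTT; exact: compact_setX.
have := tube_lemma _ _ _ cTT oO (fun k _ => Nx0 k.1 k.2).
by apply: filterS => x Ox y z; exact: (Ox (y, z) I).
Qed.

Lemma profinite_open_normal_subgroup (W : set T) : profinite T -> nbhs one W ->
  exists N, [/\ open N, normal_subgroup mul inv one N & N `<=` W].
Proof.
move=> [cT hT tdT] W1.
have [C [clC C1 CW]] := zero_dimensional_clopen_nbhs cT hT one W
  (totally_disconnected_zero_dimensional cT hT tdT) W1.
exists (core_stabilizer C); split.
- exact: open_core_stabilizer.
- exact: core_stabilizer_normal.
- exact: subset_trans (core_stabilizer_sub _ C1) CW.
Qed.

Lemma engel_comm_constant_on_open (g : T) (E : set T) :
  compact [set: T] -> hausdorff_space T ->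
  countable E -> engel_sink mul inv g E ->
  exists i, exists2 s, E s & exists U,
    [/\ (0 < i)%N, open U, U !=set0 & forall u, U u -> engel_comm mul inv u i g = s].
Proof.
move=> cT hT cE sink.
have sink' x : exists i, E (engel_comm mul inv x i.+1 g).
  by have [n0 n0_gt0 En] := sink x; exists n0.-1; rewrite prednK //; exact: En.
have [i [s Es [U [oU U0 Us]]]] := continuous_family_constant_on_open _ _ cT hT
  (hausdorff_accessible hT) (ex_intro _ one I) cE
  (fun i => continuous_engel_comm _ _ mul_cont inv_cont g i.+1) sink'.
by exists i.+1, s => //; exists U.
Qed.

Lemma profinite_engel_comm_constant_on_coset (g : T) (E : set T) :
  profinite T -> countable E -> engel_sink mul inv g E ->
  exists i, exists2 s, E s & exists N b,
    [/\ (0 < i)%N, open N, normal_subgroup mul inv one N &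
        forall n, N n -> engel_comm mul inv (mul n b) i g = s].
Proof.
move=> pT cE sink; have [cT hT _] := pT.
have [i [s Es [U [i_gt0 oU [u Uu] Us]]]] :=
  engel_comm_constant_on_open _ _ cT hT cE sink.
have W1 : nbhs one [set y | U (mul y u)].
  have cu : continuous (fun y => mul y u).
    by apply: continuous_mul => // [y|]; [exact: cvg_id | exact: cst_continuous].
  by apply: cu; rewrite mul1g; exact: open_nbhs_nbhs.
have [N [oN nN NW]] := profinite_open_normal_subgroup _ pT W1.
by exists i, s => //; exists N, u; split => // n /NW; exact: Us.
Qed.

End topological_group.

Theorem lemma2p6 (T : topologicalType) (mul : T -> T -> T) (inv : T -> T) (one : T)
  (g : T) (E : set T) :
  is_topological_group mul inv one ->
  compact [set: T] -> hausdorff_space T ->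
  countable E -> engel_sink mul inv g E ->
  (exists i : nat, exists2 s : T, E s & exists U : set T,
     [/\ (0 < i)%N, open U, U !=set0 &
         forall u, U u -> engel_comm mul inv u i g = s])
  /\
  (profinite T ->
   exists i : nat, exists2 s : T, E s & exists (N : set T) (b : T),
     [/\ (0 < i)%N, open N, normal_subgroup mul inv one N &
         forall n, N n -> engel_comm mul inv (mul n b) i g = s]).
Proof.
move=> TG cT hT cE sink; split.
  exact: engel_comm_constant_on_open TG g E cT hT cE sink.
by move=> pT; exact: profinite_engel_comm_constant_on_coset TG g E pT cE sink.
Qed.
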